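(* Let $G$ be a topological groupoid on the space $X=O_G$ whose underlying groupoid is compatible locally trivial (with respect to an open cover $\{U_{i}\}$ of $X$ and local sections $s_{x,i}\colon U_{i}\rightarrow G_x$ as in the context), and let $W$ be an open subset of $G$ containing all identities $1_x$, $x\in X$. Suppose that every local section $s_{x,i}$ has image in $W$, i.e. $s_{x,i}(U_i)\subseteq W$. Then the monodromy groupoid $M(G,W)$ (a groupoid on $X$) is compatible locally trivial.
   Context: Groupoid conventions: a groupoid $G$ on object set $O_G$ has source and target maps $\alpha,\beta\colon G\rightarrow O_G$, identities $1_x$; the product $ab$ is defined iff $\beta(a)=\alpha(b)$. $G(x,y)$ denotes elements from $x$ to $y$; the star of $x$ is $G_x=\{a\in G\colon\alpha(a)=x\}$. A topological groupoid is a groupoid with topologies on $G$ and $O_G$ making source, target, identity map, inversion and partial multiplication continuous. Compatible locally trivial: Let $X$ be a topological space and $G$ a groupoid on $X$. Suppose $\mathcal U=\{U_i\colon i\in I\}$ is an open cover of $X$ which is also a base for its topology, and for each $i$ and each $x\in U_i$ there is a map (local section about $x$) $s_{x,i}\colon U_i\to G_x$ with $\beta(s_{x,i}(y))=y$ for $y\in U_i$ and $s_{x,i}(x)=1_x$. $G$ is compatible locally trivial if for every $x$ and any two local sections $s_{x,i}, s_{x,j}$ about $x$ there is $V_{ij}\in\mathcal U$ with $x\in V_{ij}\subseteq U_i\cap U_j$ and $s_{x,i}|_{V_{ij}}=s_{x,j}|_{V_{ij}}$. Monodromy groupoid: for a groupoid $G$ and a subset $W\subseteq G$ containing all identities, let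 $F(W)$ be the free groupoid on the graph $W$ (objects $O_G$, an edge $[a]\colon\alpha(a)\to\beta(a)$ for each $a\in W$), and $N$ the normal subgroupoid of $F(W)$ generated by the elements $[a][b][ab]^{-1}$ for all $a,b\in W$ with $\beta(a)=\alpha(b)$ and $ab\in W$. Then $M(G,W)=F(W)/N$, a groupoid on $O_G$; the map $\widetilde\imath\colon W\to M(G,W)$, $a\mapsto$ class of $[a]$, is injective. *)

From HB Require Import structures.
From mathcomp Require Import all_boot all_classical topology.
From Stdlib Require Import Relation_Operators.

Set Implicit Arguments.
Unset Strict Implicit.
Unset Printing Implicit Defensive.

Local Open Scope classical_set_scope.

(* Groupoids, given by their operations (source, target, identity, inverse, *)
(* product).  The product [mul a b] is only meaningful when tgt a = src b;  *)
(* outside this domain its value is irrelevant (unconstrained).             *)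
Definition is_groupoid (O C : Type) (src tgt : C -> O) (idg : O -> C)
  (inv : C -> C) (mul : C -> C -> C) : Prop :=
  [/\ (forall x, src (idg x) = x /\ tgt (idg x) = x),
      (forall a b, tgt a = src b -> src (mul a b) = src a /\ tgt (mul a b) = tgt b),
      (forall a b c, tgt a = src b -> tgt b = src c ->
           mul (mul a b) c = mul a (mul b c)),
      (forall a, mul (idg (src a)) a = a /\ mul a (idg (tgt a)) = a) &
      (forall a, src (inv a) = tgt a /\ tgt (inv a) = src a /\
                 mul a (inv a) = idg (src a) /\ mul (inv a) a = idg (tgt a))].

Definition is_topological_groupoid (X G : topologicalType) (src tgt : G -> X)
  (idg : X -> G) (inv : G -> G) (mul : G -> G -> G) : Prop :=
  is_groupoid src tgt idg inv mul /\
  [/\ continuous src, continuous tgt, continuous idg,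
      continuous inv &
      {within [set p : G * G | tgt p.1 = src p.2], continuous (fun p => mul p.1 p.2)}].

(* the local sections s x i : U i -> G_x (only values on U i matter).       *)
Definition compat_loc_triv (X : topologicalType) (C : Type) (src tgt : C -> X)
  (idg : X -> C) (I : Type) (U : I -> set X) (s : X -> I -> X -> C) : Prop :=
  [/\ (forall i, open (U i)),
      (forall x, exists i, U i x),
      (forall (A : set X) x, open A -> A x -> exists i, U i x /\ U i `<=` A),
      (forall i x, U i x ->
          (forall y, U i y -> src (s x i y) = x /\ tgt (s x i y) = y)
          /\ s x i x = idg x) &
      (forall x i j, U i x -> U j x ->
          exists k, [/\ U k x, U k `<=` U i `&` U j &
                       forall y, U k y -> s x i y = s x j y])].

Definition is_compat_loc_triv (X : topologicalType) (C : Type) (src tgt : C -> X)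
  (idg : X -> C) : Prop :=
  exists (I : Type) (U : I -> set X) (s : X -> I -> X -> C),
    compat_loc_triv src tgt idg U s.

Definition quot (T : Type) (R : T -> T -> Prop) :=
  {P : T -> Prop | exists t, P = R t}.
Definition qcls (T : Type) (R : T -> T -> Prop) (t : T) : quot R :=
  exist _ (R t) (ex_intro _ t erefl).
Definition qrep (T : Type) (R : T -> T -> Prop) (q : quot R) : T :=
  projT1 (cid (proj2_sig q)).

(* The free groupoid on a graph (vertices O, edges E, es/et endpoints):     *)
(* composable words in the edges and their formal inverses, modulo free     *)
(* reduction (cancellation of adjacent e e^-1 and e^-1 e).                  *)
Section FreeGroupoid.
Variables (O E : Type) (es et : E -> O).

(* (true, e) stands for [e], (false, e) for [e]^-1 *)
Definition letter := (bool * E)%type.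
Definition lsrc (l : letter) : O := if l.1 then es l.2 else et l.2.
Definition ltgt (l : letter) : O := if l.1 then et l.2 else es l.2.
Definition lflip (l : letter) : letter := (~~ l.1, l.2).

Fixpoint wvalid (x : O) (w : seq letter) : Prop :=
  match w with
  | [::] => True
  | l :: w' => lsrc l = x /\ wvalid (ltgt l) w'
  end.

Fixpoint wend (x : O) (w : seq letter) : O :=
  match w with
  | [::] => x
  | l :: w' => wend (ltgt l) w'
  end.

Definition winv (w : seq letter) : seq letter := rev (map lflip w).

Lemma wvalid_cat x u v : wvalid x u -> wvalid (wend x u) v -> wvalid x (u ++ v).
Proof. by elim: u x => [|l u IH] x //= [-> Hu] Hv; split => //; apply: IH. Qed.

Lemma wend_cat x u v : wend x (u ++ v) = wend (wend x u) v.
Proof. by elim: u x => [|l u IH] x //=. Qed.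

Lemma wvalid_winv x u : wvalid x u -> wvalid (wend x u) (winv u) /\ wend (wend x u) (winv u) = x.
Proof.
elim: u x => [|l u IH] x //= [Hl Hu].
have [H1 H2] := IH _ Hu.
rewrite /winv /= rev_cons -cats1 in H1 H2 *.
have Hf : lsrc (lflip l) = ltgt l /\ ltgt (lflip l) = x.
  by move: Hl; rewrite /lsrc /ltgt /lflip /=; case: (l.1).
split.
- apply: wvalid_cat; first exact: H1.
  by rewrite /= H2 (proj1 Hf).
- by rewrite wend_cat /= (proj2 Hf).
Qed.

Definition rpath := {p : O * seq letter | wvalid p.1 p.2}.
Definition rstart (p : rpath) : O := (proj1_sig p).1.
Definition rend (p : rpath) : O := wend (proj1_sig p).1 (proj1_sig p).2.

Definition fred1 (p q : rpath) : Prop :=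
  (proj1_sig p).1 = (proj1_sig q).1 /\
  exists u v l, (proj1_sig p).2 = u ++ [:: l; lflip l] ++ v /\
                (proj1_sig q).2 = u ++ v.

Definition frel := clos_refl_sym_trans rpath fred1.

Definition FG := quot frel.

Definition rnil (x : O) : rpath := exist _ (x, [::]) I.
Definition rinv (p : rpath) : rpath :=
  exist (fun q : O * seq letter => wvalid q.1 q.2)
    (rend p, winv (proj1_sig p).2)
    (proj1 (wvalid_winv (proj2_sig p))).
Definition rcat (p q : rpath) (h : rend p = rstart q) : rpath :=
  exist (fun r : O * seq letter => wvalid r.1 r.2)
    ((proj1_sig p).1, (proj1_sig p).2 ++ (proj1_sig q).2)
    (wvalid_cat (proj2_sig p)
       (eq_ind_r (fun z => wvalid z (proj1_sig q).2) (proj2_sig q) h)).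
Definition redge (e : E) : rpath :=
  exist (fun r : O * seq letter => wvalid r.1 r.2) (es e, [:: (true, e)]) (conj erefl I).

Definition FGsrc (f : FG) : O := rstart (qrep f).
Definition FGtgt (f : FG) : O := rend (qrep f).
Definition FGidg (x : O) : FG := qcls frel (rnil x).
Definition FGinv (f : FG) : FG := qcls frel (rinv (qrep f)).
(* product; only meaningful for composable f, g (otherwise returns f) *)
Definition FGmul (f g : FG) : FG :=
  match pselect (rend (qrep f) = rstart (qrep g)) with
  | left h => qcls frel (rcat h)
  | right _ => f
  end.
Definition FGedge (e : E) : FG := qcls frel (redge e).

End FreeGroupoid.

Inductive normal_closure (O C : Type) (src tgt : C -> O) (idg : O -> C)
  (inv : C -> C) (mul : C -> C -> C) (S : C -> Prop) : C -> Prop :=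
| nc_gen f : S f -> normal_closure src tgt idg inv mul S f
| nc_id x : normal_closure src tgt idg inv mul S (idg x)
| nc_mul f g : normal_closure src tgt idg inv mul S f ->
    normal_closure src tgt idg inv mul S g -> tgt f = src g ->
    normal_closure src tgt idg inv mul S (mul f g)
| nc_inv f : normal_closure src tgt idg inv mul S f ->
    normal_closure src tgt idg inv mul S (inv f)
| nc_conj n g : normal_closure src tgt idg inv mul S n ->
    src n = src g -> tgt n = src g ->
    normal_closure src tgt idg inv mul S (mul (mul (inv g) n) g).

Section Monodromy.
Variables (X C : Type) (src tgt : C -> X) (idg : X -> C) (inv : C -> C)
  (mul : C -> C -> C) (W : C -> Prop).

Definition Wedge := {a : C | W a}.
Definition Wsrc (a : Wedge) : X := src (proj1_sig a).
Definition Wtgt (a : Wedge) : X := tgt (proj1_sig a).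

Definition FW := FG Wsrc Wtgt.
Definition FWsrc : FW -> X := @FGsrc _ _ Wsrc Wtgt.
Definition FWtgt : FW -> X := @FGtgt _ _ Wsrc Wtgt.
Definition FWidg : X -> FW := @FGidg _ _ Wsrc Wtgt.
Definition FWinv : FW -> FW := @FGinv _ _ Wsrc Wtgt.
Definition FWmul : FW -> FW -> FW := @FGmul _ _ Wsrc Wtgt.
Definition FWedge : Wedge -> FW := @FGedge _ _ Wsrc Wtgt.

Definition Mgen (f : FW) : Prop :=
  exists a b ab : Wedge,
    [/\ tgt (proj1_sig a) = src (proj1_sig b),
        proj1_sig ab = mul (proj1_sig a) (proj1_sig b) &
        f = FWmul (FWmul (FWedge a) (FWedge b)) (FWinv (FWedge ab))].

Definition MN : FW -> Prop := normal_closure FWsrc FWtgt FWidg FWinv FWmul Mgen.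

(* N consists of loops (totally disconnected); the quotient F/N identifies *)
(* f and g with the same endpoints whenever f g^-1 lies in N.               *)
Definition Mrel (f g : FW) : Prop :=
  [/\ FWsrc f = FWsrc g, FWtgt f = FWtgt g & MN (FWmul f (FWinv g))].

Definition MG := quot Mrel.
Definition Msrc (m : MG) : X := FWsrc (qrep m).
Definition Mtgt (m : MG) : X := FWtgt (qrep m).
Definition Midg (x : X) : MG := qcls Mrel (FWidg x).
Definition Minv (m : MG) : MG := qcls Mrel (FWinv (qrep m)).
Definition Mmul (m n : MG) : MG := qcls Mrel (FWmul (qrep m) (qrep n)).
Definition Miota (a : Wedge) : MG := qcls Mrel (FWedge a).

End Monodromy.

From Pilot Require Import Defs.
From mathcomp Require Import all_boot all_classical topology.
From Stdlib Require Import Relation_Operators.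

(* The local sections of M(G,W) are obtained by pushing those of G through
   ĩ : W -> M(G,W), which is possible because every s_{x,i} lands in W.
   Compatibility is inherited for free, since each new section is a pointwise
   function of the old one; what has to be checked is that ĩ preserves source
   and target.  As endpoints in M(G,W) are read off a representative, this
   amounts to the quotient relation being reflexive, i.e. to f f^-1 reducing to
   an identity in the free groupoid F(W).  Neither the topology of G nor the
   openness of W plays a role. *)

Set Implicit Arguments.
Unset Strict Implicit.
Local Open Scope classical_set_scope.

Lemma val_sig_inj (A : Type) (P : A -> Prop) (p q : {x | P x}) :
  proj1_sig p = proj1_sig q -> p = q.
Proof. by case: p q => x hx [y hy] /= exy; apply: eq_exist. Qed.

Lemma qcls_eq (T : Type) (R : T -> T -> Prop) t t' :
  R t = R t' -> qcls R t = qcls R t'.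
Proof. by move=> e; apply: val_sig_inj. Qed.

Lemma qrep_qcls (T : Type) (R : T -> T -> Prop) t :
  R t t -> R (qrep (qcls R t)) t.
Proof. by rewrite /qrep; case: (cid _) => t' /= ->. Qed.

Section FreeGroupoidFacts.
Variables (O E : Type) (es et : E -> O).
Local Notation rpath := (rpath es et).
Local Notation frel := (@Defs.frel O E es et).
Local Notation wvalid := (wvalid es et).
Local Notation wend := (wend es et).

Lemma wvalid_catP x u v : wvalid x (u ++ v) -> wvalid x u /\ wvalid (wend x u) v.
Proof. by elim: u x => [|l u IH] x //= [-> /IH []]. Qed.

Lemma fred1_endpoints (p q : rpath) :
  fred1 p q -> rstart p = rstart q /\ rend p = rend q.
Proof.
case: p q => [[x w] hw] [[y w'] hw'] [/= exy] [u [v [l [ew ew']]]].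
rewrite /rstart /rend /=; simpl in *; subst w w' y; split => //.
move: hw => /wvalid_catP [_ /= [Hl _]].
rewrite !wend_cat /=; congr wend.
by rewrite -Hl /lflip /lsrc /ltgt /=; case: (l.1).
Qed.

Lemma frel_endpoints (p q : rpath) :
  frel p q -> rstart p = rstart q /\ rend p = rend q.
Proof.
elim=> [a b /fred1_endpoints //| a //| a b _ [-> ->] //| a b c _ [-> ->] _ [-> ->] //].
Qed.

Lemma frel_eq (p q : rpath) : frel p q -> frel p = frel q.
Proof.
move=> h; apply/funext => r; apply/propext; split => h2.
- exact: rst_trans (rst_sym _ _ _ _ h) h2.
- exact: rst_trans h h2.
Qed.

Lemma frel_rcatl (q q' : rpath) : frel q q' -> forall (p : rpath) h h',
  frel (@rcat _ _ _ _ p q h) (@rcat _ _ _ _ p q' h').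
Proof.
elim=> [a b red | a | a b _ IH | a b c Hab IH1 _ IH2] p h h'.
- apply: rst_step; split => //=.
  case: red => _ [u [v [l [e1 e2]]]].
  by exists ((proj1_sig p).2 ++ u), v, l; rewrite e1 e2 !catA.
- by rewrite (_ : rcat h = rcat h'); [apply: rst_refl | apply: val_sig_inj].
- exact: rst_sym (IH _ _ _).
- have hb : rend p = rstart b by rewrite h; exact: (frel_endpoints Hab).1.
  exact: rst_trans (IH1 p h hb) (IH2 p hb h').
Qed.

Lemma frel_cat_winv x w (h : wvalid x (w ++ winv w)) :
  frel (exist (fun r => wvalid r.1 r.2) (x, w ++ winv w) h) (rnil es et x).
Proof.
elim/last_ind: w h => [|w l IH] h.
  by case: h; apply: rst_refl.
have ew : rcons w l ++ winv (rcons w l) = w ++ [:: l, lflip l & winv w].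
  by rewrite /winv map_rcons rev_rcons cat_rcons.
have hw : wvalid x w by move: h; rewrite ew => /wvalid_catP [].
have hww : wvalid x (w ++ winv w) by apply: wvalid_cat => //; exact: (wvalid_winv hw).1.
apply: rst_trans (IH hww); apply: rst_step; split => //=.
by exists w, (winv w), l.
Qed.

Lemma FG_mulV (f : FG es et) : FGmul f (FGinv f) = FGidg es et (FGsrc f).
Proof.
rewrite /FGmul /FGinv /FGidg /FGsrc; set p := qrep f.
have := @qrep_qcls _ frel (rinv p) (rst_refl _ _ _).
set q := qrep _ => pq.
case: pselect => [h|]; last by rewrite (frel_endpoints pq).1.
apply/qcls_eq/frel_eq.
have h' : rend p = rstart (rinv p) by [].
apply: rst_trans (frel_rcatl pq h h') _.
rewrite (_ : rcat h' = exist _ _ (proj2_sig (rcat h'))).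
  exact: frel_cat_winv.
exact: val_sig_inj.
Qed.

Lemma FG_edge_endpoints e :
  FGsrc (FGedge es et e) = es e /\ FGtgt (FGedge es et e) = et e.
Proof. exact: frel_endpoints (@qrep_qcls _ frel _ (rst_refl _ _ (redge es et e))). Qed.

Lemma FG_id_endpoints x :
  FGsrc (FGidg es et x) = x /\ FGtgt (FGidg es et x) = x.
Proof. exact: frel_endpoints (@qrep_qcls _ frel _ (rst_refl _ _ (rnil es et x))). Qed.

End FreeGroupoidFacts.

Section MonodromyFacts.
Variables (X C : Type) (src tgt : C -> X) (mul : C -> C -> C) (W : C -> Prop).

Lemma Mrel_refl (f : FW src tgt W) : Mrel mul f f.
Proof. by split => //; rewrite /FWmul /FWinv FG_mulV; apply: nc_id. Qed.

Lemma Miota_endpoints (a : Wedge W) :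
  Msrc (Miota src tgt mul a) = src (proj1_sig a) /\
  Mtgt (Miota src tgt mul a) = tgt (proj1_sig a).
Proof.
rewrite /Msrc /Mtgt /Miota.
have [-> -> _] := qrep_qcls (Mrel_refl (FWedge src tgt a)).
exact: FG_edge_endpoints.
Qed.

Lemma Midg_endpoints x :
  Msrc (Midg src tgt mul W x) = x /\ Mtgt (Midg src tgt mul W x) = x.
Proof.
rewrite /Msrc /Mtgt /Midg.
have [-> -> _] := qrep_qcls (Mrel_refl (FWidg src tgt W x)).
exact: FG_id_endpoints.
Qed.

(* ĩ(c), pinned to 1_x on the diagonal so that no proof of ĩ(1_x) = 1_x is
   needed. *)
Definition Mlift (x y : X) (c : C) : MG src tgt mul W :=
  if `[< y = x >] then Midg src tgt mul W x
  else if pselect (W c) is left Wc then Miota src tgt mul (exist _ c Wc)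
  else Midg src tgt mul W x.

Lemma Mlift_diag x c : Mlift x x c = Midg src tgt mul W x.
Proof. by rewrite /Mlift asboolT. Qed.

Lemma Mlift_endpoints x y c : W c -> src c = x -> tgt c = y ->
  Msrc (Mlift x y c) = x /\ Mtgt (Mlift x y c) = y.
Proof.
move=> Wc sc tc; rewrite /Mlift.
case: asboolP => [yx|_]; first by rewrite -yx; exact: Midg_endpoints.
case: pselect => [Wc'|/(_ Wc)[]]; rewrite -sc -tc; exact: Miota_endpoints.
Qed.

End MonodromyFacts.

Lemma compat_loc_triv_comp (X : topologicalType) (C D : Type)
  (src tgt : C -> X) (idg : X -> C) (src' tgt' : D -> X) (idg' : X -> D)
  (I : Type) (U : I -> set X) (s : X -> I -> X -> C) (P : set C)
  (phi : X -> X -> C -> D) :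
  compat_loc_triv src tgt idg U s ->
  (forall i x, U i x -> s x i @` U i `<=` P) ->
  (forall x y c, P c -> src c = x -> tgt c = y ->
     src' (phi x y c) = x /\ tgt' (phi x y c) = y) ->
  (forall x, phi x x (idg x) = idg' x) ->
  compat_loc_triv src' tgt' idg' U (fun x i y => phi x y (s x i y)).
Proof.
move=> [Uo Ucov Ubase Us Ucomp] sP phi_end phi_id; split => //.
- move=> i x Uix; have [s_end s_id] := Us i x Uix.
  split=> [y Uiy|]; last by rewrite s_id phi_id.
  have [src_sy tgt_sy] := s_end y Uiy.
  by apply: phi_end src_sy tgt_sy; apply: (sP i x Uix); exists y.
- move=> x i j Uix Ujx; have [k [Ukx Uk s_eq]] := Ucomp x i j Uix Ujx.
  by exists k; split => // y Uky; rewrite s_eq.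
Qed.

Theorem mainTheorem2 (X G : topologicalType) (src tgt : G -> X) (idg : X -> G)
  (inv : G -> G) (mul : G -> G -> G)
  (I : Type) (U : I -> set X) (s : X -> I -> X -> G) (W : set G) :
  is_topological_groupoid src tgt idg inv mul ->
  compat_loc_triv src tgt idg U s ->
  open W ->
  (forall x, W (idg x)) ->
  (forall i x, U i x -> s x i @` U i `<=` W) ->
  is_compat_loc_triv (@Msrc X G src tgt mul W) (@Mtgt X G src tgt mul W)
    (@Midg X G src tgt mul W).
Proof.
move=> _ s_loc_triv _ _ sW.
exists I, U, (fun x i y => Mlift src tgt mul W x y (s x i y)).
apply: compat_loc_triv_comp s_loc_triv sW _ _ => [x y c|x].
- exact: Mlift_endpoints.
- exact: Mlift_diag.
Qed.
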